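(* Let $A\in\mathbb{R}_+^{m\times n}$, $y\in\mathbb{Z}_+^m$, $\beta>0$, and $F(f)=\mathbb{1}^TAf-\sum_{i=1}^m y_i\log(e_i^TAf+\beta)$. Let $\tau>0$ and $\mathrm{pen}:\mathbb{R}^n\to\mathbb{R}$, and set $\rho(f)=\tau\,\mathrm{pen}(f)+\delta_+(f)$, where $\delta_+(f)=0$ if $f\ge 0$ (componentwise) and $\delta_+(f)=+\infty$ otherwise. Assume: (A1) $F$ is proper convex and Lipschitz continuously differentiable on $\mathbb{R}_+^n$; (A2) $\rho$ is proper convex and continuous on $\mathbb{R}_+^n$. Let $\alpha_{\min}>0$. Consider sequences $\{f^k\}\subset\mathbb{R}_+^n$ and $\{\alpha_k\}\subset(0,\infty)$ such that for each $k$, $$f^{k+1}\in\arg\min_{f\in\mathbb{R}^n}\; (f-f^k)^T\nabla F(f^k)+\tfrac{\alpha_k}{2}\|f-f^k\|_2^2+\rho(f).$$ Suppose $\bar f\in\mathbb{R}_+^n$ is not critical for $\min_f F(f)+\rho(f)$, i.e. $0\notin\nabla F(\bar f)+\partial\rho(\bar f)$. Then for any $\bar\alpha\ge\alpha_{\min}$ there exists $\epsilon>0$ such that for any subsequence $\{f^{k_j}\}_{j\in\mathbb{Z}_+}$ with $\lim_{j\to\infty}f^{k_j}=\bar f$, $f^{k_j}\in\mathbb{R}_+^n$ for all $j$, and $\alpha_{\min}\le\alpha_{k_j}\le\bar\alpha$, we have $\|f^{k_j+1}-f^{k_j}\|_2\ge\epsilon$ for all $j$ sufficiently large.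
   Context: $\partial\rho$ denotes the subdifferential (set of subgradients) of the convex function $\rho$. $\mathbb{1}$ is the all-ones vector and $e_i$ the $i$-th canonical basis vector of $\mathbb{R}^m$. *)

From HB Require Import structures.
From mathcomp Require Import all_boot all_order all_algebra.
From mathcomp Require Import all_classical all_reals all_analysis.
Set Implicit Arguments. Unset Strict Implicit. Unset Printing Implicit Defensive.
Import Order.TTheory GRing.Theory Num.Theory.
Import numFieldNormedType.Exports.
Local Open Scope classical_set_scope.
Local Open Scope ring_scope.

Section Defs.
Variables (R : realType) (m n : nat).

Definition nonneg (f : 'cV[R]_n) : bool := [forall i, 0 <= f i 0].

Definition dotv (u v : 'cV[R]_n) : R := \sum_i u i 0 * v i 0.
Definition norm2 (u : 'cV[R]_n) : R := Num.sqrt (dotv u u).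

Definition poissonF (A : 'M[R]_(m, n)) (y : 'I_m -> nat) (beta : R)
  (f : 'cV[R]_n) : R :=
  \sum_i (A *m f) i 0 - \sum_i (y i)%:R * ln ((A *m f) i 0 + beta).

Definition grad (F : 'cV[R]_n -> R) (f : 'cV[R]_n) : 'cV[R]_n :=
  \col_j ('d F f (delta_mx j 0 : 'cV[R]_n)).

Definition rho_pen (tau : R) (pen : 'cV[R]_n -> R) (f : 'cV[R]_n) : \bar R :=
  if nonneg f then (tau * pen f)%:E else +oo%E.

Definition subdiff (r : 'cV[R]_n -> \bar R) (x : 'cV[R]_n) : set 'cV[R]_n :=
  [set g | forall h, (r x + (dotv g (h - x))%:E <= r h)%E].

Definition convex_ext (r : 'cV[R]_n -> \bar R) : Prop :=
  forall (f g : 'cV[R]_n) (t : R), 0 <= t <= 1 ->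
    (r (t *: f + (1 - t) *: g)%R <= t%:E * r f + (1 - t)%:E * r g)%E.
Definition proper_ext (r : 'cV[R]_n -> \bar R) : Prop :=
  (exists f, (r f < +oo)%E) /\ (forall f, (-oo < r f)%E).

Definition convex_on_nonneg (F : 'cV[R]_n -> R) : Prop :=
  forall (f g : 'cV[R]_n) (t : R), nonneg f -> nonneg g -> 0 <= t <= 1 ->
    F (t *: f + (1 - t) *: g) <= t * F f + (1 - t) * F g.

Definition lipschitz_diff_on_nonneg (F : 'cV[R]_n -> R) : Prop :=
  (forall f, nonneg f -> differentiable F f) /\
  exists L : R, forall f g, nonneg f -> nonneg g ->
    norm2 (grad F f - grad F g) <= L * norm2 (f - g).

Definition prox_obj (F : 'cV[R]_n -> R) (r : 'cV[R]_n -> \bar R)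
  (fk : 'cV[R]_n) (alpha : R) (f : 'cV[R]_n) : \bar R :=
  ((dotv (f - fk) (grad F fk) + alpha / 2 * norm2 (f - fk) ^+ 2)%:E + r f)%E.

Definition critical (F : 'cV[R]_n -> R) (r : 'cV[R]_n -> \bar R)
  (x : 'cV[R]_n) : Prop :=
  exists g, subdiff r x g /\ grad F x + g = 0.

End Defs.

From HB Require Import structures.
From mathcomp Require Import all_boot all_order all_algebra.
From mathcomp Require Import all_classical all_reals all_analysis.
From mathcomp Require Import ring lra.
Set Implicit Arguments. Unset Strict Implicit. Unset Printing Implicit Defensive.
Import Order.TTheory GRing.Theory Num.Theory.
Import numFieldNormedType.Exports.
Local Open Scope classical_set_scope.
Local Open Scope ring_scope.

(* Suppose no such eps exists.  Then there are iterates f^(k_l) with f^(k_l) -> fbar,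
   ||f^(k_l+1) - f^(k_l)|| -> 0 and alpha_(k_l) <= alpha_bar.  Passing to the limit in the
   optimality of f^(k_l+1) for the proximal subproblem (the gradient of F is Lipschitz and
   rho is continuous on the orthant) shows that fbar minimizes
   h |-> <grad F fbar, h - fbar> + alpha_bar/2 ||h - fbar||^2 + rho h.  On the segment
   x_t = fbar + t (h - fbar), convexity gives rho x_t <= rho fbar + t (rho h - rho fbar)
   while the quadratic term is O(t^2); letting t -> 0 yields
   rho fbar - <grad F fbar, h - fbar> <= rho h, i.e. fbar would be critical. *)

Section EuclideanGeometry.
Variables (R : realType) (n : nat).
Implicit Types (u v : 'cV[R]_n).

Lemma dotv_ge0 u : 0 <= dotv u u.
Proof. by apply: sumr_ge0 => i _; rewrite -expr2 sqr_ge0. Qed.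

Lemma dotvC u v : dotv u v = dotv v u.
Proof. by apply: eq_bigr => i _; rewrite mulrC. Qed.

Lemma dotvZl (a : R) u v : dotv (a *: u) v = a * dotv u v.
Proof. by rewrite /dotv mulr_sumr; apply: eq_bigr => i _; rewrite mxE mulrA. Qed.

Lemma dotvZr (a : R) u v : dotv u (a *: v) = a * dotv u v.
Proof. by rewrite dotvC dotvZl dotvC. Qed.

Lemma dotvNl u v : dotv (- u) v = - dotv u v.
Proof. by rewrite /dotv -sumrN; apply: eq_bigr => i _; rewrite mxE mulNr. Qed.

Lemma dotv0l v : dotv 0 v = 0.
Proof. by rewrite -(scale0r 0) dotvZl mul0r. Qed.

Lemma sqr_norm2 u : norm2 u ^+ 2 = dotv u u.
Proof. by rewrite sqr_sqrtr // dotv_ge0. Qed.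

Lemma norm_coord_le_norm2 u i : `|u i 0| <= norm2 u.
Proof.
rewrite -sqrtr_sqr; apply: ler_wsqrtr.
rewrite /dotv (bigD1 i) //= -expr2 lerDl.
by apply: sumr_ge0 => j _; rewrite -expr2 sqr_ge0.
Qed.

Lemma mx_norm_le_norm2 u : `|u| <= norm2 u.
Proof.
rewrite [X in X <= _]/Num.norm /= mx_normrE.
apply: bigmax_le; first exact: sqrtr_ge0.
by move=> [i j] _ /=; rewrite (ord1 j); exact: norm_coord_le_norm2.
Qed.

Lemma nonneg_convex u v (t : R) :
  nonneg u -> nonneg v -> 0 <= t <= 1 -> nonneg (t *: u + (1 - t) *: v).
Proof.
move=> /forallP u0 /forallP v0 /andP[t0 t1]; apply/forallP => i; rewrite !mxE.
by apply: addr_ge0; apply: mulr_ge0; rewrite ?subr_ge0.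
Qed.

End EuclideanGeometry.

Section Convergence.
Context {R : realType} {T : Type} {F : set_system T} {FF : Filter F}.

Lemma cvg_dist_le (V : pseudoMetricNormedZmodType R) (a : T -> V) x (b : T -> R) :
  (forall t, `|x - a t| <= b t) -> b @ F --> 0 -> a @ F --> x.
Proof.
move=> ab /cvgrPdist_lt b0; apply/cvgrPdist_lt => e e0.
apply: filterS (b0 e e0) => t; rewrite sub0r normrN.
exact/le_lt_trans/(le_trans (ab t) (ler_norm _)).
Qed.

Variable n : nat.
Implicit Types (a b : T -> 'cV[R]_n) (x y : 'cV[R]_n).

Lemma cvg_coord a x i j : a @ F --> x -> (fun t => a t i j) @ F --> x i j.
Proof. exact: (continuous_cvg _ (@coord_continuous R n 1 i j x)). Qed.

Lemma cvg_dotv a b x y : a @ F --> x -> b @ F --> y ->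
  (fun t => dotv (a t) (b t)) @ F --> dotv x y.
Proof.
move=> ax bx; apply: cvg_big => [|i _]; first exact: add_continuous.
by apply: cvgM; exact: cvg_coord.
Qed.

Lemma cvg_norm2 a x : a @ F --> x -> (fun t => norm2 (a t - x)) @ F --> 0.
Proof.
move=> ax; have -> : 0 = norm2 (x - x) by rewrite subrr /norm2 dotv0l sqrtr0.
apply: (continuous_cvg _ (@sqrt_continuous R _)).
by apply: cvg_dotv; apply: cvgB => //; exact: cvg_cst.
Qed.

End Convergence.

Lemma le0_of_forall_le_mul (R : realFieldType) (z w : R) :
  0 <= w -> (forall t, 0 < t <= 1 -> z <= t * w) -> z <= 0.
Proof.
move=> w0 zw; apply/ler_addgt0Pr => e e0; rewrite add0r.
have we0 : 0 < w + e by lra.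
have t0 : 0 < e / (w + e) by exact: divr_gt0.
have t1 : e / (w + e) <= 1 by rewrite ler_pdivrMr // mul1r; lra.
apply: le_trans (zw _ (introT andP (conj t0 t1))) _.
by rewrite mulrAC ler_pdivrMr // ler_pM2l //; lra.
Qed.

Section ConvexOnOrthant.
Variables (R : realType) (n : nat) (p : 'cV[R]_n -> R).
Hypothesis p_convex : convex_on_nonneg p.

Lemma subgradient_of_quadratic_bound x G c :
  nonneg x -> 0 <= c ->
  (forall h, nonneg h -> p x <= dotv (h - x) G + c * dotv (h - x) (h - x) + p h) ->
  forall h, nonneg h -> p x + dotv (- G) (h - x) <= p h.
Proof.
move=> x0 c0 bound h h0; rewrite dotvNl dotvC.
set d := dotv (h - x) G; set q := dotv (h - x) (h - x).
suff : p x - d - p h <= 0 by lra.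
apply: (@le0_of_forall_le_mul _ _ (c * q)) => [|t /andP[t0 t1]].
  by apply: mulr_ge0 => //; exact: dotv_ge0.
have t01 : 0 <= t <= 1 by rewrite ltW.
pose ht := t *: h + (1 - t) *: x.
have ht_x : ht - x = t *: (h - x) by apply/matrixP => i j; rewrite !mxE; ring.
have := bound ht (nonneg_convex h0 x0 t01).
rewrite ht_x !(dotvZl, dotvZr) -/d -/q.
have := p_convex h0 x0 t01; rewrite -/ht.
nra.
Qed.

End ConvexOnOrthant.

Section PenalizedIndicator.
Variables (R : realType) (n : nat) (tau : R) (pen : 'cV[R]_n -> R).
Local Notation rho := (rho_pen tau pen).

Lemma convex_on_nonneg_rho_pen : convex_ext rho -> convex_on_nonneg (fun f => tau * pen f).
Proof.
move=> rho_convex f g t f0 g0 t01.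
by have := rho_convex f g t t01; rewrite /rho_pen nonneg_convex // f0 g0 lee_fin.
Qed.

Lemma subdiff_rho_pen x g : nonneg x ->
  (forall h, nonneg h -> tau * pen x + dotv g (h - x) <= tau * pen h) ->
  subdiff rho x g.
Proof.
move=> x0 gx h; rewrite /rho_pen x0.
by case: ifPn => [h0|_]; [rewrite -EFinD lee_fin gx | rewrite leey].
Qed.

Lemma cvg_rho_pen {T : Type} {F : set_system T} {FF : Filter F} (a : T -> 'cV[R]_n) x :
  {within [set y | nonneg y], continuous rho} ->
  (forall t, nonneg (a t)) -> nonneg x -> a @ F --> x ->
  (fun t => tau * pen (a t)) @ F --> tau * pen x.
Proof.
move=> rho_cont a0 x0 ax.
have a_within : a @ F --> within [set y | nonneg y] (nbhs x).
  by move=> P /ax; apply: (@filterS _ F) => t; apply; exact: a0.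
have := cvg_trans (cvg_app rho a_within) ((subspace_continuousP _ _).1 rho_cont x x0).
rewrite /from_subspace /rho_pen x0 => /fine_cvgP[_].
by apply: cvg_trans; apply: near_eq_cvg; apply: nearW => t /=; rewrite a0.
Qed.

End PenalizedIndicator.

Lemma prox_step_le (R : realType) (n : nat) (F : 'cV[R]_n -> R) (tau : R)
    (pen : 'cV[R]_n -> R) (f0 f1 h : 'cV[R]_n) (a abar : R) :
  nonneg f1 -> nonneg h -> 0 < a <= abar ->
  (prox_obj F (rho_pen tau pen) f0 a f1 <= prox_obj F (rho_pen tau pen) f0 a h)%E ->
  dotv (f1 - f0) (grad F f0) + tau * pen f1 <=
    dotv (h - f0) (grad F f0) + abar / 2 * dotv (h - f0) (h - f0) + tau * pen h.
Proof.
move=> f1_0 h0 /andP[a0 a_abar].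
rewrite /prox_obj /rho_pen f1_0 h0 -!EFinD lee_fin !sqr_norm2.
have := dotv_ge0 (f1 - f0); have := dotv_ge0 (h - f0); nra.
Qed.

Lemma le_linearized_model_lim (R : realType) (n : nat) (p : 'cV[R]_n -> R)
    (u v g : nat -> 'cV[R]_n) x G c h :
  u @ \oo --> x -> v @ \oo --> x -> g @ \oo --> G -> (p \o v) @ \oo --> p x ->
  (forall t, dotv (v t - u t) (g t) + p (v t) <=
               dotv (h - u t) (g t) + c * dotv (h - u t) (h - u t) + p h) ->
  p x <= dotv (h - x) G + c * dotv (h - x) (h - x) + p h.
Proof.
move=> ux vx gG pv model.
have lhs_cvg : (fun t => dotv (v t - u t) (g t) + p (v t)) @ \oo --> p x.
  rewrite -[p x]add0r -(dotv0l G) -(subrr x).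
  by apply: cvgD => //; apply: cvg_dotv => //; exact: cvgB.
have hu : (fun t => h - u t) @ \oo --> h - x by apply: cvgB => //; exact: cvg_cst.
have rhs_cvg : (fun t => dotv (h - u t) (g t) + c * dotv (h - u t) (h - u t) + p h)
    @ \oo --> dotv (h - x) G + c * dotv (h - x) (h - x) + p h.
  apply: cvgD; last exact: cvg_cst.
  by apply: cvgD; [|apply: cvgMr]; exact: cvg_dotv.
by apply: (ler_cvg_to lhs_cvg rhs_cvg); apply: nearW.
Qed.

Lemma far_steps_eventually (R : realType) (n : nat) (f : nat -> 'cV[R]_n)
    (alpha : nat -> R) (fbar : 'cV[R]_n) (abar e : R) (kk : nat -> nat) :
  (forall k, `|fbar - f k| < e -> alpha k <= abar -> e <= norm2 (f k.+1 - f k)) ->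
  0 < e -> (fun j => f (kk j)) @ \oo --> fbar -> (forall j, alpha (kk j) <= abar) ->
  exists J : nat, forall j, (J <= j)%N -> e <= norm2 (f (kk j).+1 - f (kk j)).
Proof.
move=> far e0 /cvgrPdist_lt/(_ e e0)[J _ near_fbar] alpha_kk.
by exists J => j Jj; apply: far; [exact: near_fbar | exact: alpha_kk].
Qed.

Section ProximalGradient.
Variables (R : realType) (n : nat) (F : 'cV[R]_n -> R) (tau : R) (pen : 'cV[R]_n -> R).
Variables (f : nat -> 'cV[R]_n) (alpha : nat -> R).
Local Notation rho := (rho_pen tau pen).
Hypothesis f_nonneg : forall k, nonneg (f k).
Hypothesis alpha_gt0 : forall k, 0 < alpha k.
Hypothesis f_prox : forall k g,
  (prox_obj F rho (f k) (alpha k) (f k.+1) <= prox_obj F rho (f k) (alpha k) g)%E.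

Lemma critical_of_vanishing_steps (L abar : R) (fbar : 'cV[R]_n) (k : nat -> nat) :
  (forall u v, nonneg u -> nonneg v -> norm2 (grad F u - grad F v) <= L * norm2 (u - v)) ->
  convex_ext rho -> {within [set x | nonneg x], continuous rho} ->
  nonneg fbar -> 0 <= abar ->
  (forall l, [/\ `|fbar - f (k l)| < harmonic l,
                 norm2 (f (k l).+1 - f (k l)) < harmonic l & alpha (k l) <= abar]) ->
  critical F rho fbar.
Proof.
move=> F_lip rho_convex rho_cont fbar0 abar0 near_k.
have u_cvg : (f \o k) @ \oo --> fbar.
  by apply: (cvg_dist_le _ cvg_harmonic) => l; have [/ltW] := near_k l.
have v_cvg : (fun l => f (k l).+1) @ \oo --> fbar.
  rewrite -[fbar]addr0.
  have -> : (fun l => f (k l).+1) = (fun l => f (k l) + (f (k l).+1 - f (k l))).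
    by apply: funext => l; rewrite addrC subrK.
  apply: cvgD => //; apply: (cvg_dist_le _ cvg_harmonic) => l.
  rewrite sub0r normrN; have [_ /ltW step _] := near_k l.
  exact: le_trans (mx_norm_le_norm2 _) step.
have g_cvg : (fun l => grad F (f (k l))) @ \oo --> grad F fbar.
  have : (fun l => L * norm2 (f (k l) - fbar)) @ \oo --> 0.
    by rewrite -(mulr0 L); apply: cvgMr; exact: (cvg_norm2 u_cvg).
  apply: cvg_dist_le => l; rewrite distrC.
  exact: le_trans (mx_norm_le_norm2 _) (F_lip _ _ (f_nonneg _) fbar0).
have pen_cvg : (fun l => tau * pen (f (k l).+1)) @ \oo --> tau * pen fbar.
  exact: cvg_rho_pen rho_cont (fun l => f_nonneg (k l).+1) fbar0 v_cvg.
exists (- grad F fbar); split; last by rewrite addrN.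
apply: (subdiff_rho_pen fbar0).
apply: (@subgradient_of_quadratic_bound _ _ _ (convex_on_nonneg_rho_pen rho_convex)
  _ _ (abar / 2) fbar0); first exact: divr_ge0.
move=> h h0.
apply: (le_linearized_model_lim (p := fun f => tau * pen f) u_cvg v_cvg g_cvg pen_cvg) => l.
have [_ _ alpha_le] := near_k l.
apply: (prox_step_le (a := alpha (k l))) => //; first by rewrite alpha_gt0.
exact: f_prox.
Qed.

End ProximalGradient.

Theorem lemma2 (R : realType) (m n : nat) (A : 'M[R]_(m, n)) (y : 'I_m -> nat)
  (beta tau : R) (pen : 'cV[R]_n -> R) (alpha_min : R)
  (f : nat -> 'cV[R]_n) (alpha : nat -> R) (fbar : 'cV[R]_n) :
  (forall i j, 0 <= A i j) -> 0 < beta -> 0 < tau ->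
  (* (A1) *)
  convex_on_nonneg (poissonF A y beta) ->
  lipschitz_diff_on_nonneg (poissonF A y beta) ->
  (* (A2) *)
  proper_ext (rho_pen tau pen) -> convex_ext (rho_pen tau pen) ->
  {within [set x | nonneg x], continuous (rho_pen tau pen)} ->
  0 < alpha_min ->
  (forall k, nonneg (f k)) -> (forall k, 0 < alpha k) ->
  (forall k g, (prox_obj (poissonF A y beta) (rho_pen tau pen) (f k) (alpha k) (f k.+1)
               <= prox_obj (poissonF A y beta) (rho_pen tau pen) (f k) (alpha k) g)%E) ->
  nonneg fbar ->
  ~ critical (poissonF A y beta) (rho_pen tau pen) fbar ->
  forall alpha_bar, alpha_min <= alpha_bar ->
  exists eps : R, 0 < eps /\
    forall kk : nat -> nat, (forall j, (kk j < kk j.+1)%N) ->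
      (fun j => f (kk j)) @ \oo --> fbar ->
      (forall j, nonneg (f (kk j))) ->
      (forall j, alpha_min <= alpha (kk j) <= alpha_bar) ->
      exists J : nat, forall j, (J <= j)%N ->
        eps <= norm2 (f (kk j).+1 - f (kk j)).
Proof.
move=> _ _ _ _ [_ [L F_lip]] _ rho_convex rho_cont alpha_min_gt0 f_nonneg alpha_gt0
  f_prox fbar0 not_critical abar alpha_min_le.
have [[e [e0 far]]|near_stationary] := pselect (exists e : R, 0 < e /\
    forall k, `|fbar - f k| < e -> alpha k <= abar -> e <= norm2 (f k.+1 - f k)).
  exists e; split => // kk _ f_kk _ alpha_kk.
  by apply: (far_steps_eventually far e0 f_kk) => j; case/andP: (alpha_kk j).
have near_harmonic (l : nat) : exists k, [/\ `|fbar - f k| < harmonic l,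
    norm2 (f k.+1 - f k) < harmonic l & alpha k <= abar].
  apply: contrapT => no_k; apply: near_stationary.
  exists (harmonic l); split => [|k' f_k' alpha_k']; first exact: harmonic_gt0.
  by rewrite leNgt; apply/negP => step; apply: no_k; exists k'.
have [k near_k] := choice near_harmonic.
have abar0 : 0 <= abar by apply: le_trans alpha_min_le; exact: ltW.
by case: not_critical; exact: (critical_of_vanishing_steps f_nonneg alpha_gt0 f_prox
  F_lip rho_convex rho_cont fbar0 abar0 near_k).
Qed.
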